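(* If $G$ is a simple graph with no $K_5$-minor, then $G$ is $(4,1)$-choosable.
   Context: A $(k,d)$-list assignment for a graph $G$ assigns to each vertex $v$ a list $L(v)$ of at least $k$ colors such that $|L(x)\cap L(y)|\le d$ whenever $x$ and $y$ are adjacent. $G$ is $(k,d)$-choosable if for every $(k,d)$-list assignment $L$ there is a proper vertex coloring $\varphi$ of $G$ with $\varphi(v)\in L(v)$ for all $v$. *)

From mathcomp Require Import all_boot.
From mathcomp Require Import finmap.
Set Implicit Arguments. Unset Strict Implicit. Unset Printing Implicit Defensive.

Definition simple_graph (T : finType) (e : rel T) : Prop :=
  symmetric e /\ irreflexive e.

Definition connected_in (T : finType) (e : rel T) (A : {set T}) : Prop :=
  forall x y, x \in A -> y \in A ->
    connect [rel u v | [&& u \in A, v \in A & e u v]] x y.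

Definition has_K_minor (n : nat) (T : finType) (e : rel T) : Prop :=
  exists B : 'I_n -> {set T},
    [/\ forall i, B i != set0,
        forall i, connected_in e (B i),
        forall i j, i != j -> [disjoint B i & B j]%bool &
        forall i j, i != j -> exists x y, [/\ x \in B i, y \in B j & e x y]].

Definition kd_list_assignment (T : finType) (e : rel T) (k d : nat)
    (L : T -> {fset nat}) : Prop :=
  (forall v, k <= #|` L v|%fset)%N /\
  (forall x y, e x y -> #|` (L x `&` L y)%fset|%fset <= d)%N.

Definition proper_L_coloring (T : finType) (e : rel T)
    (L : T -> {fset nat}) (phi : T -> nat) : Prop :=
  (forall v, phi v \in L v) /\ (forall x y, e x y -> phi x != phi y).

Definition kd_choosable (T : finType) (e : rel T) (k d : nat) : Prop :=
  forall L : T -> {fset nat}, kd_list_assignment e k d L ->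
    exists phi : T -> nat, proper_L_coloring e L phi.

(* By Mader's bound, a graph without K_5 minor has at most 3n - 6 edges on n >= 3
   vertices; as this passes to subgraphs, every vertex set W spans at most 3|W|
   edges, and Hakimi's theorem yields an orientation with all in-degrees at most 3.
   Give each vertex v a colour of L(v) outside the sets L(u) `&` L(v) of its
   in-neighbours u: these exclude at most 3 of its 4 colours.  An arc x -> y is then
   never monochromatic, since a common colour of x and y lies in L(x) `&` L(y). *)

From mathcomp Require Import all_boot.
From mathcomp Require Import finmap.
From mathcomp Require Import zify.
Set Implicit Arguments. Unset Strict Implicit. Unset Printing Implicit Defensive.

Section Minors.
Variable T : finType.
Implicit Types (e : rel T) (A S N : {set T}) (k : nat).

Definition induced e A : rel T := [rel a b | [&& a \in A, b \in A & e a b]].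

Lemma connected_in_sub e e' A :
  {in A &, subrel e' e} -> connected_in e' A -> connected_in e A.
Proof.
move=> e'e conn x y xA yA; apply: connect_sub (conn x y xA yA) => a b /and3P[aA bA e'ab].
by apply: connect1; rewrite /= aA bA e'e.
Qed.

Definition K_minor_in k e S : Prop :=
  exists B : 'I_k -> {set T},
    [/\ forall i, B i != set0, forall i, B i \subset S, forall i, connected_in e (B i),
        forall i j, i != j -> [disjoint B i & B j] &
        forall i j, i != j -> exists x y, [/\ x \in B i, y \in B j & e x y]].

Lemma K_minor_in_has_K_minor k e S : K_minor_in k e S -> has_K_minor k e.
Proof. by case=> B [B0 _ Bconn Bdisj Badj]; exists B. Qed.

Lemma K_minor_in_subset k e S S' : S' \subset S -> K_minor_in k e S' -> K_minor_in k e S.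
Proof.
by move=> sS'S [B [B0 BS' Bconn Bdisj Badj]]; exists B; split=> // i; apply: subset_trans sS'S.
Qed.

Lemma K1_minor_in e S x : x \in S -> K_minor_in 1 e S.
Proof.
move=> xS; exists (fun=> [set x]); split=> [i|i|i a b|i j|i j].
- by apply/set0Pn; exists x; rewrite inE.
- by rewrite sub1set.
- by rewrite !inE => /eqP-> /eqP->.
- by rewrite !ord1 eqxx.
- by rewrite !ord1 eqxx.
Qed.

Lemma K_minor_in_apex k e S N v :
  symmetric e -> v \in S -> N \subset S -> v \notin N -> {in N, forall x, e v x} ->
  K_minor_in k e N -> K_minor_in k.+1 e S.
Proof.
move=> sym_e vS sNS vN evN [B [B0 BN Bconn Bdisj Badj]].
have inN i x : x \in B i -> x \in N by apply/subsetP.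
pose B' (i : 'I_k.+1) := if unlift ord_max i is Some i' then B i' else [set v].
have B'v i' : [disjoint B i' & [set v]].
  by rewrite disjoint_sym disjoints1; apply: contra vN => /inN.
exists B'; split=> [i|i|i|i j|i j]; rewrite /B'.
- by case: unliftP => [i'|] _ //; apply/set0Pn; exists v; rewrite inE.
- by case: unliftP => [i'|] _; [apply: subset_trans sNS | rewrite sub1set].
- by case: unliftP => [i'|] _ // a b; rewrite !inE => /eqP-> /eqP->.
- case: unliftP => [i'|] ->; case: unliftP => [j'|] -> //; rewrite ?eqxx //.
  + by move=> ij; apply: Bdisj; apply: contraNneq ij => ->.
  + by rewrite disjoint_sym.
- case: unliftP => [i'|] ->; case: unliftP => [j'|] -> //; rewrite ?eqxx // => ij.
  + by apply: Badj; apply: contraNneq ij => ->.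
  + have /set0Pn[x xB] := B0 i'.
    by exists x, v; rewrite inE sym_e evN //; apply: inN xB.
  + have /set0Pn[x xB] := B0 j'.
    by exists v, x; rewrite inE evN //; apply: inN xB.
Qed.

(* Contraction of the edge uv into u; v keeps its old edges but is dropped by
   restricting to S :\ v. *)
Definition contract e u v : rel T :=
  fun a b => (a != b) && [|| e a b, (a == u) && e v b | (b == u) && e v a].

Lemma contract_sym e u v : symmetric e -> symmetric (contract e u v).
Proof.
move=> sym_e a b; rewrite /contract eq_sym sym_e; congr (_ && _).
by case: (e b a); case: (a == u); case: (b == u); case: (e v a); case: (e v b).
Qed.

Lemma contract_irr e u v : irreflexive (contract e u v).
Proof. by move=> a; rewrite /contract eqxx. Qed.

Section Contraction.
Variables (e : rel T) (u v : T).
Hypotheses (sym_e : symmetric e) (euv : e u v).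

Lemma connected_in_contract A : v \notin A -> connected_in (contract e u v) A ->
  connected_in e (if u \in A then v |: A else A).
Proof.
move=> vA conn; case: ifPn => [uA|uA]; last first.
  apply: connected_in_sub conn => a b aA bA /andP[_ /or3P[//|/andP[/eqP au _]|/andP[/eqP bu _]]].
  - by rewrite -au aA in uA.
  - by rewrite -bu bA in uA.
pose R := induced e (v |: A).
have symR : connect_sym R by apply: sym_connect_sym => a b; rewrite /R /induced /= sym_e andbCA.
have edgeR a b : a \in v |: A -> b \in v |: A -> e a b -> connect R a b.
  by move=> aA bA eab; apply: connect1; rewrite /R /induced /= aA bA.
have inA a : a \in A -> a \in v |: A by move=> aA; rewrite !inE aA orbT.
have vvA : v \in v |: A by rewrite !inE eqxx.
have connA a b : a \in A -> b \in A -> connect R a b.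
  move=> aA bA; apply: connect_sub (conn a b aA bA) => {}a {}b /and3P[{}aA {}bA].
  case/andP=> _ /or3P[eab|/andP[/eqP-> evb]|/andP[/eqP-> eva]].
  - by apply: edgeR; rewrite ?inA.
  - by apply: connect_trans (edgeR _ _ (inA _ uA) vvA euv) (edgeR _ _ vvA (inA _ bA) evb).
  - by apply: connect_trans (edgeR _ _ (inA _ aA) vvA _) (edgeR _ _ vvA (inA _ uA) _);
      rewrite sym_e.
have to_u x : x \in v |: A -> connect R x u.
  case/setU1P=> [->|xA]; last exact: connA.
  by apply: edgeR => //; [exact: inA | rewrite sym_e].
by move=> x y xA yA; apply: connect_trans (to_u x xA) _; rewrite symR; apply: to_u.
Qed.

Lemma K_minor_in_contract k S : u \in S -> v \in S ->
  K_minor_in k (contract e u v) (S :\ v) -> K_minor_in k e S.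
Proof.
move=> uS vS [B [B0 BS Bconn Bdisj Badj]].
have vB i : v \notin B i by apply/negP => /(subsetP (BS i)); rewrite !inE eqxx.
pose B' i := if u \in B i then v |: B i else B i.
have sBB' i : B i \subset B' i by rewrite /B'; case: ifP => // _; apply: subsetUr.
have inB' i x : x \in B i -> x \in B' i by apply/subsetP.
have vB' i : u \in B i -> v \in B' i by rewrite /B' => ->; rewrite setU11.
exists B'; split=> [i|i|i|i j ij|i j ij].
- by have /set0Pn[x xB] := B0 i; apply/set0Pn; exists x; apply: inB'.
- have sBS : B i \subset S := subset_trans (BS i) (subsetDl S [set v]).
  by rewrite /B'; case: ifP => // _; rewrite subUset sub1set vS.
- exact: connected_in_contract.
- have disjU1 A A' : v \notin A' -> [disjoint A & A'] -> [disjoint v |: A & A'].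
    by move=> vA' AA'; rewrite disjoints_subset subUset sub1set inE vA' -disjoints_subset.
  rewrite /B'; case: ifP => ui; case: ifP => uj; move: (Bdisj i j ij) => Bij.
  + by rewrite (disjointFr Bij ui) in uj.
  + exact: disjU1.
  + by rewrite disjoint_sym disjU1 // disjoint_sym.
  + exact: Bij.
- have [x [y [xB yB]]] := Badj i j ij.
  case/andP=> _ /or3P[exy|/andP[/eqP xu evy]|/andP[/eqP yu evx]].
  + by exists x, y; split; rewrite ?inB'.
  + by subst x; exists v, y; split; [exact: vB' | exact: inB' |].
  + by subst y; exists x, v; split; [exact: inB' | exact: vB' | rewrite sym_e].
Qed.

End Contraction.

End Minors.

Section Arcs.
Variable T : finType.
Implicit Types (e : rel T) (A B S : {set T}).

Definition nbh e S x : {set T} := [set y in S | e x y].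

Definition arcs e S : {set T * T} := [set p | [&& p.1 \in S, p.2 \in S & e p.1 p.2]].

Lemma card_arcs e S : #|arcs e S| = \sum_(x in S) #|nbh e S x|.
Proof.
rewrite /arcs -sum1dep_card [LHS]big_mkcond /=.
rewrite -(pair_big xpredT xpredT (fun a b => if [&& a \in S, b \in S & e a b] then 1 else 0)) /=.
rewrite [RHS]big_mkcond /=; apply: eq_bigr => a _; case: (a \in S) => /=; last by rewrite big1.
by rewrite -sum1_card [RHS]big_mkcond /=; apply: eq_bigr => b _; rewrite !inE.
Qed.

Lemma eq_arcs e e' S : {in S &, e =2 e'} -> arcs e S = arcs e' S.
Proof.
move=> ee'; apply/setP => -[a b]; rewrite !inE /=.
by case aS: (a \in S); case bS: (b \in S); rewrite //= ee'.
Qed.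

Lemma subset_arcs e e' S : subrel e' e -> arcs e' S \subset arcs e S.
Proof. by move=> e'e; apply/subsetP => p; rewrite !inE => /and3P[-> -> /e'e]. Qed.

Lemma arcsI e A B : arcs e (A :&: B) = arcs e A :&: arcs e B.
Proof.
apply/setP => p; rewrite !inE.
by case: (p.1 \in A); case: (p.1 \in B); case: (p.2 \in A); case: (p.2 \in B); case: (e _ _).
Qed.

Lemma card_arcs_le e S : irreflexive e -> #|arcs e S| <= #|S| * (#|S| - 1).
Proof.
move=> irr_e; rewrite card_arcs -sum_nat_const; apply: leq_sum => x xS.
rewrite (cardsD1 x S) xS add1n subSS subn0; apply: subset_leq_card.
apply/subsetP => y; rewrite !inE => /andP[yS exy].
by rewrite yS andbT; apply: contraTneq exy => ->; rewrite irr_e.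
Qed.

Lemma card_arcs_ge e S m : {in S, forall x, m <= #|nbh e S x|} -> #|S| * m <= #|arcs e S|.
Proof. by move=> mindeg; rewrite card_arcs -sum_nat_const; apply: leq_sum. Qed.

Section SymmetricRelation.
Variable e : rel T.
Hypotheses (sym_e : symmetric e) (irr_e : irreflexive e).

Lemma card_arcsD1 S v : v \in S -> #|arcs e S| = #|arcs e (S :\ v)| + 2 * #|nbh e S v|.
Proof.
move=> vS; rewrite !card_arcs (big_setD1 v vS) /=.
have deg_del x : x \in S :\ v -> #|nbh e S x| = #|nbh e (S :\ v) x| + (x \in nbh e S v).
  case/setD1P=> _ xS; rewrite (cardsD1 v) addnC !inE vS xS sym_e; congr (_ + _).
  by apply: eq_card => y; rewrite !inE andbA.
have sum_nbh : \sum_(x in S :\ v) (x \in nbh e S v : nat) = #|nbh e S v|.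
  rewrite -big_mkcondr -sum1_card; apply: eq_bigl => x; rewrite !inE.
  by case: (x =P v) => [->|_]; rewrite ?irr_e ?andbF ?andbA ?andbb.
by rewrite (eq_bigr _ deg_del) big_split /= sum_nbh; lia.
Qed.

Lemma even_card_arcs S : ~~ odd #|arcs e S|.
Proof.
have [n] := ubnP #|S|; elim: n S => // n IHn S ltSn.
have [->|[v vS]] := set_0Vmem S; first by rewrite card_arcs big_set0.
rewrite (card_arcsD1 vS) oddD oddM /= addbF; apply: IHn.
by move: ltSn; rewrite (cardsD1 v S) vS; lia.
Qed.

End SymmetricRelation.

Lemma card_arcs_contract e S u v : symmetric e -> irreflexive e -> u \in S -> v \in S -> e u v ->
  #|arcs e S| <= #|arcs (contract e u v) (S :\ v)| + 2 + 2 * #|nbh e (nbh e S v) u|.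
Proof.
move=> sym_e irr_e uS vS euv; have uv : u != v by apply: contraTneq euv => ->; rewrite irr_e.
have uSv : u \in S :\ v by rewrite !inE uv.
rewrite (card_arcsD1 sym_e irr_e vS) (card_arcsD1 sym_e irr_e uSv).
rewrite (card_arcsD1 (contract_sym u v sym_e) (contract_irr e u v) uSv).
have -> : arcs (contract e u v) (S :\ v :\ u) = arcs e (S :\ v :\ u).
  apply: eq_arcs => a b; rewrite !inE => /and3P[au _ _] /and3P[bu _ _].
  by rewrite /contract (negbTE au) (negbTE bu) /= orbF; case: eqP => [->|]; rewrite ?irr_e.
set A := nbh e (S :\ v) u; set B := nbh e S v :\ u.
have sAB : A :|: B \subset nbh (contract e u v) (S :\ v) u.
  apply/subsetP => y; rewrite !inE /contract eqxx /=.
  case/orP => [/andP[/andP[yv yS] euy]|/andP[yu /andP[yS evy]]].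
    by rewrite yv yS euy /= andbT; apply: contraTneq euy => <-; rewrite irr_e.
  have yv : y != v by apply: contraTneq evy => ->; rewrite irr_e.
  by rewrite yv yS eq_sym yu evy orbT.
have cardB : #|nbh e S v| = #|B| + 1.
  by rewrite /B (cardsD1 u (nbh e S v)) !inE uS sym_e euv addnC.
have cardAB : #|A :&: B| <= #|nbh e (nbh e S v) u|.
  apply: subset_leq_card; apply/subsetP => y; rewrite !inE.
  by case/and4P => /andP[/andP[_ ->] ->] _ _ ->.
by have := cardsUI A B; have := subset_leq_card sAB; lia.
Qed.

(* Strict supermodularity: the edge xy is counted in A :|: B but in neither A nor B. *)
Lemma card_arcs_UI e A B x y : symmetric e -> x \in A :\: B -> y \in B :\: A -> e x y ->
  #|arcs e A| + #|arcs e B| + 2 <= #|arcs e (A :|: B)| + #|arcs e (A :&: B)|.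
Proof.
move=> sym_e; rewrite !inE => /andP[xB xA] /andP[yA yB] exy.
have xy : x != y by apply: contraNneq xB => ->.
set Q := [set (x, y); (y, x)].
have cardQ : #|Q| = 2 by rewrite cards2; case: eqP => // -[] /eqP; rewrite (negbTE xy).
have disjQ : [disjoint arcs e A :|: arcs e B & Q].
  rewrite disjoint_sym disjoints_subset; apply/subsetP => p; rewrite !inE.
  by case/orP => /eqP->; rewrite /= ?(negbTE xB) ?(negbTE yA) ?andbF.
have sQ : arcs e A :|: arcs e B :|: Q \subset arcs e (A :|: B).
  apply/subsetP => p; rewrite !inE.
  case/orP => [/orP[]/and3P[-> -> ->]|/orP[]/eqP->]; rewrite /= ?orbT //.
  - by rewrite xA yB exy orbT.
  - by rewrite xA yB sym_e exy orbT.
have := subset_leq_card sQ; rewrite cardsU (disjoint_setI0 disjQ) cards0 subn0 cardQ.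
by rewrite arcsI; have := cardsUI (arcs e A) (arcs e B); lia.
Qed.

End Arcs.

Section MaderBound.
Variable T : finType.
Implicit Types (e : rel T) (S : {set T}).

(* As #|arcs e S| counts every edge twice, this is Mader's bound
   |E(S)| <= (k - 2)|S| - 'C(k - 1, 2), valid for graphs without K_k minor when k <= 7. *)
Definition edge_bound k e S := #|arcs e S| + (k - 1) * (k - 2) <= 2 * (k - 2) * #|S|.

Definition mader_bound k : Prop := forall e S, symmetric e -> irreflexive e ->
  ~ K_minor_in k e S -> k - 2 <= #|S| -> edge_bound k e S.

Lemma mader_bound2 : mader_bound 2.
Proof.
move=> e S sym_e irr_e noK2 _; rewrite /edge_bound !muln0 addn0 leqn0 cards_eq0.
apply/eqP/setP => -[x y]; rewrite !inE /=; apply/negP => /and3P[xS yS exy]; apply: noK2.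
apply: (K_minor_in_apex (N := [set y]) (v := x)) (K1_minor_in e (set11 y)) => //.
- by rewrite sub1set.
- by rewrite inE; apply: contraTneq exy => ->; rewrite irr_e.
- by move=> z /set1P->.
Qed.

(* S violates [edge_bound k] by 2 y, while S :\ v satisfies it for every graph
   without K_k minor. *)
Section MaderStep.
Variables (e : rel T) (S : {set T}) (v : T) (k y : nat).
Hypotheses (sym_e : symmetric e) (irr_e : irreflexive e) (vS : v \in S) (k_gt2 : 2 < k).
Hypothesis noKk : ~ K_minor_in k e S.
Hypothesis bound_del : forall e', symmetric e' -> irreflexive e' ->
  ~ K_minor_in k e' (S :\ v) -> edge_bound k e' (S :\ v).
Hypothesis excess : #|arcs e S| + (k - 1) * (k - 2) = 2 * (k - 2) * #|S| + 2 * y.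

Lemma excess_degree : y + (k - 2) <= #|nbh e S v|.
Proof.
have noKk_del : ~ K_minor_in k e (S :\ v).
  by move/(K_minor_in_subset (subsetDl S [set v])).
have := bound_del sym_e irr_e noKk_del; move: excess.
by rewrite /edge_bound (card_arcsD1 sym_e irr_e vS) (cardsD1 v S) vS; nia.
Qed.

Lemma excess_common_nbh u : u \in nbh e S v -> y + (k - 3) <= #|nbh e (nbh e S v) u|.
Proof.
rewrite inE => /andP[uS evu]; have euv : e u v by rewrite sym_e.
have := card_arcs_contract sym_e irr_e uS vS euv.
have := bound_del (contract_sym u v sym_e) (contract_irr e u v)
  (fun h => noKk (K_minor_in_contract sym_e euv uS vS h)).
by move: excess; rewrite /edge_bound (cardsD1 v S) vS; nia.
Qed.

Lemma nbh_no_K_minor : ~ K_minor_in k.-1 e (nbh e S v).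
Proof.
move/(K_minor_in_apex sym_e vS) => apex; apply: noKk; rewrite -(prednK (ltnW (ltnW k_gt2))).
apply: apex; first by apply/subsetP => x /setIdP[].
- by rewrite inE irr_e andbF.
- by move=> x /setIdP[].
Qed.

End MaderStep.

Lemma even_gap a b : ~~ odd a -> ~~ odd b -> a < b -> exists2 y, 0 < y & b = a + 2 * y.
Proof. by move=> even_a even_b lt_ab; exists ((b - a)./2); lia. Qed.

(* The final count for k = m + 3, with n = #|S|, a = #|arcs e S|, d the minimum
   degree and aN the number of arcs inside a minimum-degree neighbourhood.  For m = 2
   it needs y to be an integer, i.e. the parity of the arc count; for k = 6 it fails. *)
Lemma mader_count m n d y a aN : m < 3 -> 0 < y ->
  a + m.+2 * m.+1 = 2 * m.+1 * n + 2 * y -> n * d <= a ->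
  y + m.+1 <= d -> d * (y + m) <= aN -> aN + m.+1 * m <= 2 * m * d -> False.
Proof.
case: m => [|[|[|m]]] // _ y_gt0 excess arcsS degS arcsN boundN.
- nia.
- nia.
- have y1 : y = 1 by nia.
  by subst y; nia.
Qed.

Lemma mader_bound_succ k : 1 < k < 5 -> mader_bound k -> mader_bound k.+1.
Proof.
move=> /andP[k_gt1 k_lt5] IHk e S; have [m def_k] : exists m, k = m.+2 by exists k.-2; lia.
subst k; have [n] := ubnP #|S|; elim: n e S => // n IHn e S ltSn sym_e irr_e noK sizeS.
rewrite /edge_bound !subSS !subn0 in sizeS *; rewrite leqNgt; apply/negP => over.
have {}sizeS : m.+2 <= #|S|.
  have [small|] := eqVneq #|S| m.+1; last by move: sizeS; lia.
  by have := card_arcs_le S irr_e; move: over; rewrite small; nia.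
have even_bound : ~~ odd (2 * m.+1 * #|S|) by rewrite !oddM.
have even_arcs : ~~ odd (#|arcs e S| + m.+2 * m.+1).
  by rewrite oddD (negbTE (even_card_arcs sym_e irr_e S)) oddM /=; case: (odd m).
have [y y_gt0 excess] := even_gap even_bound even_arcs over.
have [v0 v0S] : exists v0, v0 \in S by apply/set0Pn; rewrite -card_gt0; lia.
have [v vS' mindeg] := arg_minnP (fun w => #|nbh e S w|) v0S; have vS : v \in S := vS'.
have bound_del e' : symmetric e' -> irreflexive e' -> ~ K_minor_in m.+3 e' (S :\ v) ->
    edge_bound m.+3 e' (S :\ v).
  by move=> sym_e' irr_e' noK'; apply: IHn => //; move: ltSn sizeS; rewrite (cardsD1 v S) vS; lia.
have degN := @excess_degree e S v m.+3 y sym_e irr_e vS isT noK bound_del excess.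
have boundN : edge_bound m.+2 e (nbh e S v).
  apply: IHk => //; first exact: (@nbh_no_K_minor e S v m.+3 sym_e irr_e vS isT noK).
  by move: degN; lia.
have arcsN : #|nbh e S v| * (y + (m.+3 - 3)) <= #|arcs e (nbh e S v)|.
  apply: card_arcs_ge => u.
  exact: (@excess_common_nbh e S v m.+3 y sym_e irr_e vS isT noK bound_del excess u).
have arcsS : #|S| * #|nbh e S v| <= #|arcs e S| by apply: card_arcs_ge => w /mindeg.
move: degN arcsN boundN; rewrite /edge_bound !subSS !subn0.
exact: mader_count k_lt5 y_gt0 excess arcsS.
Qed.

Lemma mader_bound5 : mader_bound 5.
Proof. by do 3 apply: mader_bound_succ => //; exact: mader_bound2. Qed.

End MaderBound.

Section Orientation.
Variable T : finType.
Implicit Types (e o : rel T) (f : T -> nat) (A B W : {set T}).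

Definition orientation e f o :=
  [/\ subrel o e, forall a b, e a b -> o a b || o b a & forall v, #|[set u | o u v]| <= f v].

Definition weight_bounded e f := forall W, #|arcs e W| <= 2 * \sum_(w in W) f w.

Definition tight e f W := #|arcs e W| == 2 * \sum_(w in W) f w.

Lemma sum_setUI f A B :
  \sum_(w in A :|: B) f w + \sum_(w in A :&: B) f w = \sum_(w in A) f w + \sum_(w in B) f w.
Proof.
rewrite (big_setID (A := A :|: B) A) (big_setID (A := B) A) setUK setDUl setDv set0U setIC /=.
lia.
Qed.

Lemma tight_not_crossing e f A B x y : symmetric e -> weight_bounded e f -> e x y ->
  x \in A :\: B -> y \in B :\: A -> tight e f A -> tight e f B -> False.
Proof.
move=> sym_e bounded exy xAB yBA /eqP tightA /eqP tightB.
have := card_arcs_UI sym_e xAB yBA exy.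
have := bounded (A :|: B); have := bounded (A :&: B); have := sum_setUI f A B; lia.
Qed.

Definition deledge e a b : rel T :=
  fun p q => e p q && ~~ [|| (p == a) && (q == b) | (p == b) && (q == a)].

Lemma deledge_sub e a b : subrel (deledge e a b) e.
Proof. by move=> p q /andP[]. Qed.

Lemma deledge_sym e a b : symmetric e -> symmetric (deledge e a b).
Proof.
move=> sym_e p q; rewrite /deledge sym_e; congr (_ && _).
by case: (p == a); case: (p == b); case: (q == a); case: (q == b).
Qed.

Lemma deledge_irr e a b : irreflexive e -> irreflexive (deledge e a b).
Proof. by move=> irr_e p; rewrite /deledge irr_e. Qed.

Lemma card_arcs_deledge e a b W : symmetric e -> irreflexive e -> e a b -> a \in W -> b \in W ->
  #|arcs (deledge e a b) W| + 2 <= #|arcs e W|.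
Proof.
move=> sym_e irr_e eab aW bW; have ab : a != b by apply: contraTneq eab => ->; rewrite irr_e.
set Q := [set (a, b); (b, a)].
have cardQ : #|Q| = 2 by rewrite cards2; case: eqP => // -[] /eqP; rewrite (negbTE ab).
have disjQ : [disjoint arcs (deledge e a b) W & Q].
  rewrite disjoint_sym disjoints_subset; apply/subsetP => p; rewrite !inE.
  by case/orP => /eqP->; rewrite /= /deledge !eqxx /= ?orbT !andbF.
have sQ : arcs (deledge e a b) W :|: Q \subset arcs e W.
  apply/subsetP => p; rewrite !inE.
  case/orP => [/and3P[-> -> /deledge_sub ->] //|/orP[]/eqP-> /=]; rewrite aW bW //.
  by rewrite sym_e.
have := subset_leq_card sQ; rewrite cardsU (disjoint_setI0 disjQ) cards0 subn0 cardQ; lia.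
Qed.

Section DeleteEdge.
Variables (e : rel T) (f : T -> nat) (a b : T).
Hypotheses (sym_e : symmetric e) (irr_e : irreflexive e) (eab : e a b).
Hypotheses (bounded : weight_bounded e f)
  (no_tight : forall W, a \in W -> b \notin W -> ~~ tight e f W).

Lemma weight_pos : 0 < f a.
Proof.
have ab : a != b by apply: contraTneq eab => ->; rewrite irr_e.
have := no_tight (set11 a); rewrite inE eq_sym ab /tight big_set1 => /(_ isT).
by have := card_arcs_le [set a] irr_e; rewrite cards1; lia.
Qed.

Lemma sum_decr W :
  \sum_(w in W) f w = \sum_(w in W) (f w - (w == a)) + (a \in W).
Proof.
have fa := weight_pos.
rewrite (eq_bigr (fun w => (f w - (w == a)) + (w == a))); last first.
  by move=> w _; case: (w =P a) => [->|]; lia.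
rewrite big_split /=; congr (_ + _).
case aW: (a \in W); last by rewrite big1 // => w wW; case: (w =P a) => // wa; rewrite -wa wW in aW.
by rewrite (big_setD1 a aW) eqxx big1 // => w /setD1P[/negbTE ->].
Qed.

Lemma weight_bounded_deledge : weight_bounded (deledge e a b) (fun w => f w - (w == a)).
Proof.
move=> W; have := bounded W; have := subset_leq_card (subset_arcs W (@deledge_sub e a b)).
rewrite (sum_decr W); case: (boolP (a \in W)) => aW; last by lia.
case: (boolP (b \in W)) => bW; first by have := card_arcs_deledge sym_e irr_e eab aW bW; lia.
have := no_tight aW bW; have := even_card_arcs sym_e irr_e W; rewrite /tight (sum_decr W) aW; lia.
Qed.

Lemma orientation_add_arc o : orientation (deledge e a b) (fun w => f w - (w == a)) o ->
  orientation e f (fun p q => o p q || (p == b) && (q == a)).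
Proof.
case=> sub_o total_o indeg_o; split=> [p q|p q epq|w].
- by case/orP=> [/sub_o/deledge_sub //|/andP[/eqP-> /eqP->]]; rewrite sym_e.
- have [/orP[]/andP[/eqP-> /eqP->]|not_ab] :=
    boolP [|| (p == a) && (q == b) | (p == b) && (q == a)]; rewrite ?eqxx ?orbT //.
  have /total_o : deledge e a b p q by rewrite /deledge epq not_ab.
  by case/orP=> ->; rewrite ?orbT.
- have [->|w_a] := eqVneq w a; last first.
    have := indeg_o w; rewrite (negbTE w_a) subn0; apply: leq_trans; apply: subset_leq_card.
    by apply/subsetP => u; rewrite !inE andbF orbF.
  have sub : [set u | o u a || (u == b) && (a == a)] \subset b |: [set u | o u a].
    by apply/subsetP => u; rewrite !inE eqxx andbT orbC.
  have := subset_leq_card sub; rewrite cardsU1.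
  have := indeg_o a; have := weight_pos; have := leq_b1 (b \notin [set u | o u a]).
  by rewrite eqxx; lia.
Qed.

End DeleteEdge.

(* Hakimi's theorem.  Tight sets cannot separate an edge in both directions, so some
   edge ab has no tight set containing a but not b: delete it, lower f at a, and
   orient ab towards a. *)
Theorem hakimi_orientation e f : symmetric e -> irreflexive e -> weight_bounded e f ->
  exists o, orientation e f o.
Proof.
have [n] := ubnP #|arcs e setT|; elim: n e f => // n IHn e f lt_n sym_e irr_e bounded.
have [arcs0|[[x y] xy]] := set_0Vmem (arcs e setT).
  exists e; split=> [a b //|a b -> //|v]; suff -> : [set u | e u v] = set0 by rewrite cards0.
  apply/setP => u; rewrite !inE; apply/negbTE/negP => euv.
  by have := in_set0 (u, v); rewrite -arcs0 !inE euv.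
have exy : e x y by move: xy; rewrite !inE.
have [a [b [eab no_tight]]] : exists a b,
    e a b /\ forall W, a \in W -> b \notin W -> ~~ tight e f W.
  case: (boolP [exists W : {set T}, [&& x \in W, y \notin W & tight e f W]]); last first.
    move=> no_xy; exists x, y; split=> // W xW yW; apply: contra no_xy => tW.
    by apply/existsP; exists W; rewrite xW yW.
  case/existsP=> A /and3P[xA yA tA]; exists y, x; split=> [|B yB xB]; first by rewrite sym_e.
  apply/negP => tB; apply: (tight_not_crossing sym_e bounded exy _ _ tA tB).
    by rewrite inE xA xB.
  by rewrite inE yA yB.
have [|o orient_o] := IHn (deledge e a b) (fun w => f w - (w == a)) _
  (deledge_sym a b sym_e) (deledge_irr a b irr_e)
  (weight_bounded_deledge sym_e irr_e eab bounded no_tight).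
  by have := card_arcs_deledge sym_e irr_e eab (in_setT a) (in_setT b); lia.
by exists (fun p q => o p q || (p == b) && (q == a)); apply: orientation_add_arc.
Qed.

End Orientation.

Local Open Scope fset_scope.

Lemma exists_fresh (A : {fset nat}) (s : seq nat) :
  size s < #|` A| -> exists2 c, c \in A & c \notin s.
Proof.
move=> lt_sA; have [/hasP[c cA cs]|/hasPn A_in_s] := boolP (has [predC s] A).
  by exists c.
have := uniq_leq_size (fset_uniq A) (fun c cA => negbNE (A_in_s c cA)).
by move/leq_ltn_trans/(_ lt_sA); rewrite ltnn.
Qed.

(* Each in-neighbour u of v forbids the at most d colours of L u `&` L v at v. *)
Lemma kd_choosable_orientation (T : finType) (e o : rel T) (k d m : nat) :
  orientation e (fun=> m) o -> d * m < k -> kd_choosable e k d.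
Proof.
case=> sub_o total_o indeg_o dm_lt L [sizeL interL].
pose forbidden v := flatten [seq (L u `&` L v : seq nat) | u <- enum [set u | o u v]].
have size_forbidden v : size (forbidden v) <= d * m.
  rewrite size_flatten /shape -map_comp sumnE big_map big_enum /=.
  apply: leq_trans (_ : \sum_(u in [set u | o u v]) d <= _).
    by apply: leq_sum => u; rewrite inE => /sub_o /interL.
  by rewrite sum_nat_const mulnC leq_mul2l indeg_o orbT.
have fresh v : exists c, (c \in L v) && (c \notin forbidden v).
  have [|c cL cf] := @exists_fresh (L v) (forbidden v); last by exists c; rewrite cL.
  exact: leq_ltn_trans (size_forbidden v) (leq_trans dm_lt (sizeL v)).
exists (fun v => xchoose (fresh v)); split=> [v|x y exy].
  by have /andP[] := xchooseP (fresh v).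
wlog oxy : x y exy / o x y.
  move=> oriented; case/orP: (total_o x y exy) => [|oyx]; first exact: oriented.
  by rewrite eq_sym; exact: oriented (sub_o _ _ oyx) oyx.
have /andP[cLx _] := xchooseP (fresh x); have /andP[cLy cfy] := xchooseP (fresh y).
apply: contraNneq cfy => eq_c; apply/flattenP; exists (L x `&` L y : seq nat).
  by apply/mapP; exists x; rewrite ?mem_enum ?inE.
by rewrite in_fsetI -{1}eq_c cLx cLy.
Qed.

Lemma weight_bounded_K5_minor_free (T : finType) (e : rel T) :
  symmetric e -> irreflexive e -> ~ has_K_minor 5 e -> weight_bounded e (fun=> 3).
Proof.
move=> sym_e irr_e noK5 W; rewrite sum_nat_const.
have [small|big] := ltnP #|W| 3; first by have := card_arcs_le W irr_e; nia.
have := mader_bound5 sym_e irr_e (fun h => noK5 (K_minor_in_has_K_minor h)) big.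
by rewrite /edge_bound; lia.
Qed.

Theorem corollary2 (T : finType) (e : rel T) :
  simple_graph e -> ~ has_K_minor 5 e -> kd_choosable e 4 1.
Proof.
move=> [sym_e irr_e] noK5.
have [o orient_o] := hakimi_orientation sym_e irr_e (weight_bounded_K5_minor_free sym_e irr_e noK5).
exact: kd_choosable_orientation orient_o _.
Qed.
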